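(* Let $\boldsymbol\Sigma$ be the covariance matrix of a pure two-mode Gaussian state of a signal mode $S$ and an idler mode $I$. Then there exist a phase rotation acting on $S$ and a symplectic transformation acting on $I$ such that the transformed covariance matrix has the form $\begin{bmatrix}\boldsymbol\Sigma_S&\boldsymbol\Sigma_{SI}\\ \boldsymbol\Sigma_{SI}^\top&\boldsymbol\Sigma_I\end{bmatrix}$ with $$\boldsymbol\Sigma_S=\mathrm{diag}(ar,\,ar^{-1}),\quad \boldsymbol\Sigma_I=\mathrm{diag}(a,a),\quad \boldsymbol\Sigma_{SI}=\sqrt{a^2-\tfrac14}\begin{bmatrix}\sqrt r\cos\phi&\sqrt r\sin\phi\\ \sqrt{r^{-1}}\sin\phi&-\sqrt{r^{-1}}\cos\phi\end{bmatrix}$$ for some $a\ge\tfrac12$, $r>0$ and $\phi\in\mathbb{R}$.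
   Context: Quadrature vector $\mathbf R=(q_S,p_S,q_I,p_I)^\top$ with $[R_i,R_j]=\mathrm{i}\Omega_{ij}$, $\boldsymbol\Omega=\mathbb{I}_2\otimes\begin{bmatrix}0&1\\-1&0\end{bmatrix}$; covariance matrix $\Sigma_{ij}=\tfrac12\langle R_iR_j+R_jR_i\rangle-\langle R_i\rangle\langle R_j\rangle$ (vacuum has $\boldsymbol\Sigma=\mathbb{I}_4/2$). A phase rotation on $S$ acts on the covariance matrix by conjugation with $\mathbf R(\varphi)\oplus\mathbb{I}_2$, $\mathbf R(\varphi)=\begin{bmatrix}\cos\varphi&-\sin\varphi\\ \sin\varphi&\cos\varphi\end{bmatrix}$; a symplectic transformation $\mathbf S_I$ on $I$ acts by conjugation with $\mathbb{I}_2\oplus\mathbf S_I$. *)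

From HB Require Import structures.
From mathcomp Require Import all_boot all_order all_algebra.
From mathcomp Require Import reals trigo.
Set Implicit Arguments. Unset Strict Implicit. Unset Printing Implicit Defensive.
Import Order.TTheory GRing.Theory Num.Theory.
Local Open Scope ring_scope.

Section Defs.
Variable R : realType.

Definition mx2 (a b c d : R) : 'M[R]_2 :=
  \matrix_(i < 2, j < 2)
    if val i == 0%N then (if val j == 0%N then a else b)
    else (if val j == 0%N then c else d).

Definition Jmx : 'M[R]_2 := mx2 0 1 (-1) 0.

(* Omega = I_2 (x) J, acting on R = (q_S, p_S, q_I, p_I) *)
Definition Omega4 : 'M[R]_(2 + 2) := block_mx Jmx 0 0 Jmx.

Definition symplectic2 (S : 'M[R]_2) : Prop := S *m Jmx *m S^T = Jmx.
Definition symplectic4 (S : 'M[R]_(2 + 2)) : Prop := S *m Omega4 *m S^T = Omega4.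

(* covariance matrix of a pure two-mode Gaussian state:
   a symplectic transformation of the vacuum covariance I/2 *)
Definition pure_gaussian_cm (Sig : 'M[R]_(2 + 2)) : Prop :=
  exists S : 'M[R]_(2 + 2), symplectic4 S /\ Sig = (2%:R)^-1 *: (S *m S^T).

Definition rotmx (phi : R) : 'M[R]_2 := mx2 (cos phi) (- sin phi) (sin phi) (cos phi).

Definition transform_cm (theta : R) (SI : 'M[R]_2) (Sig : 'M[R]_(2 + 2))
  : 'M[R]_(2 + 2) :=
  let T := block_mx (rotmx theta) 0 0 SI in T *m Sig *m T^T.

Definition normal_form (a r phi : R) : 'M[R]_(2 + 2) :=
  let SigS := mx2 (a * r) 0 0 (a * r^-1) in
  let SigI := mx2 a 0 0 a in
  let c := Num.sqrt (a ^+ 2 - 4%:R^-1) in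
  let SigSI := c *: mx2 (Num.sqrt r * cos phi) (Num.sqrt r * sin phi)
                        (Num.sqrt (r^-1) * sin phi) (- (Num.sqrt (r^-1) * cos phi)) in
  block_mx SigS SigSI SigSI^T SigI.

End Defs.

From HB Require Import structures.
From mathcomp Require Import all_boot all_order all_algebra.
From mathcomp Require Import reals trigo.
From mathcomp Require Import ring.
Set Implicit Arguments. Unset Strict Implicit. Unset Printing Implicit Defensive.
Import Order.TTheory GRing.Theory Num.Theory.
Local Open Scope ring_scope.

(* Write Sig = S S^T / 2 with S symplectic.  Then Sig is symmetric, satisfies the
   purity relation Sig Omega Sig = Omega / 4, and its idler block B is positive
   definite.  A one-mode symplectic map brings B to a I with a = sqrt (det B), and a
   rotation diagonalises the signal block; the result is again the covariance matrix
   of a pure state.  Read block by block, its purity relation says that the signal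
   block is diag(a r, a / r), that the correlation block is [x y; y/r -x/r], and that
   x^2 + y^2 = r (a^2 - 1/4).  Hence a >= 1/2, and the polar angle of (x, y) is phi. *)

Lemma mulmx_block_diag_tr (R : pzRingType) m n (P : 'M[R]_m) (Q : 'M[R]_n)
    (A : 'M_m) (C : 'M_(m, n)) (D : 'M_(n, m)) (B : 'M_n) :
  block_mx P 0 0 Q *m block_mx A C D B *m (block_mx P 0 0 Q)^T =
  block_mx (P *m A *m P^T) (P *m C *m Q^T) (Q *m D *m P^T) (Q *m B *m Q^T).
Proof.
by rewrite tr_block_mx !trmx0 !mulmx_block !mulmx0 !mul0mx !addr0 !add0r.
Qed.

Lemma drsubmx_mul_tr (R : pzRingType) m1 m2 n1 n2 (S : 'M[R]_(m1 + m2, n1 + n2)) :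
  drsubmx (S *m S^T) = dlsubmx S *m (dlsubmx S)^T + drsubmx S *m (drsubmx S)^T.
Proof. by rewrite -{1 2}(submxK S) tr_block_mx mulmx_block block_mxKdr. Qed.

Section TwoModeGaussian.
Variable R : realType.
Implicit Types a b c d e f g h : R.
Local Notation J := (Jmx R).
Local Notation Omega := (Omega4 R).

Lemma mx2E (M : 'M[R]_2) : M = mx2 (M 0 0) (M 0 1) (M 1 0) (M 1 1).
Proof.
apply/matrixP => i j; rewrite mxE.
by case: i => [[|[|i]] Hi]; case: j => [[|[|j]] Hj] //=; congr (M _ _); exact: val_inj.
Qed.

Lemma mul_mx2 a b c d e f g h :
  mx2 a b c d *m mx2 e f g h = mx2 (a*e + b*g) (a*f + b*h) (c*e + d*g) (c*f + d*h).
Proof.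
apply/matrixP => i j; rewrite !mxE !big_ord_recl big_ord0 !mxE /=.
by case: i => [[|[|i]] Hi]; case: j => [[|[|j]] Hj] //=; rewrite addr0.
Qed.

Lemma tr_mx2 a b c d : (mx2 a b c d)^T = mx2 a c b d.
Proof.
by apply/matrixP => i j; rewrite !mxE; case: i => [[|[|i]] Hi]; case: j => [[|[|j]] Hj].
Qed.

Lemma add_mx2 a b c d e f g h :
  mx2 a b c d + mx2 e f g h = mx2 (a + e) (b + f) (c + g) (d + h).
Proof.
by apply/matrixP => i j; rewrite !mxE; case: i => [[|[|i]] Hi]; case: j => [[|[|j]] Hj].
Qed.

Lemma scale_mx2 k a b c d : k *: mx2 a b c d = mx2 (k * a) (k * b) (k * c) (k * d).
Proof.
by apply/matrixP => i j; rewrite !mxE; case: i => [[|[|i]] Hi]; case: j => [[|[|j]] Hj].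
Qed.

Lemma scalar_mx2 k : (k%:M : 'M[R]_2) = mx2 k 0 0 k.
Proof. by rewrite [LHS]mx2E !mxE. Qed.

Lemma mx2_zero : (0 : 'M[R]_2) = mx2 0 0 0 0.
Proof. by rewrite [LHS]mx2E !mxE. Qed.

Lemma mx2_inj a b c d e f g h :
  mx2 a b c d = mx2 e f g h -> [/\ a = e, b = f, c = g & d = h].
Proof.
move/(congr1 (fun M : 'M[R]_2 => (M 0 0, M 0 1, M 1 0, M 1 1))).
by rewrite !mxE /= => -[].
Qed.

Lemma sym_mx2E (M : 'M[R]_2) : M^T = M -> M = mx2 (M 0 0) (M 0 1) (M 0 1) (M 1 1).
Proof. by move=> sM; rewrite [LHS]mx2E -{3}sM mxE. Qed.

Lemma mx2_Jmx_tr a b c d :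
  mx2 a b c d *m J *m (mx2 a b c d)^T = (a * d - b * c) *: J.
Proof. by rewrite /Jmx tr_mx2 !mul_mx2 scale_mx2; congr mx2; ring. Qed.

Lemma symplectic2_det a b c d : a * d - b * c = 1 -> symplectic2 (mx2 a b c d : 'M[R]_2).
Proof. by move=> det1; rewrite /symplectic2 mx2_Jmx_tr det1 scale1r. Qed.

Lemma rotmx_symplectic (theta : R) : symplectic2 (rotmx theta).
Proof.
apply: symplectic2_det; rewrite mulNr opprK -!expr2 addrC.
by rewrite sin2cos2 subrK.
Qed.

Lemma unit_circle_cos_sin (x y : R) :
  x ^+ 2 + y ^+ 2 = 1 -> exists t, x = cos t /\ y = sin t.
Proof.
move=> xy1; have x_range : -1 <= x <= 1.
  have x2_le1 : x ^+ 2 <= 1 by rewrite -xy1 lerDl sqr_ge0.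
  by rewrite -ler_norml -(expr_le1 (_ : 0 < 2)%N) ?normr_ge0 // real_normK ?num_real.
have := sin_acos x_range; have y2 : 1 - x ^+ 2 = y ^+ 2 by rewrite -xy1 addrAC subrr add0r.
rewrite y2 sqrtr_sqr => sin_acos_x.
have [y_ge0|y_lt0] := lerP 0 y.
  by exists (acos x); rewrite acosK // sin_acos_x ger0_norm.
by exists (- acos x); rewrite cosN acosK // sinN sin_acos_x ltr0_norm ?opprK.
Qed.

Lemma polar_coords (x y : R) : exists t,
  x = Num.sqrt (x ^+ 2 + y ^+ 2) * cos t /\ y = Num.sqrt (x ^+ 2 + y ^+ 2) * sin t.
Proof.
set rho := Num.sqrt _.
have rho2 : rho ^+ 2 = x ^+ 2 + y ^+ 2 by rewrite sqr_sqrtr // addr_ge0 ?sqr_ge0.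
have [rho0|rho_neq0] := eqVneq rho 0.
  have : x ^+ 2 + y ^+ 2 = 0 by rewrite -rho2 rho0 expr0n.
  move/eqP; rewrite paddr_eq0 ?sqr_ge0 // !sqrf_eq0 => /andP[/eqP-> /eqP->].
  by exists 0; rewrite rho0 !mul0r.
have [|t [xt yt]] := @unit_circle_cos_sin (x / rho) (y / rho).
  by rewrite !expr_div_n -mulrDl -rho2 divff // expf_neq0.
by exists t; rewrite -xt -yt ![rho * _]mulrC !divfK.
Qed.

(* Jacobi rotation: twice its angle is the polar angle of (p - s, -2 q). *)
Lemma rotmx_diagonalize (p q s : R) : exists theta l1 l2,
  rotmx theta *m mx2 p q q s *m (rotmx theta)^T = mx2 l1 0 0 l2.
Proof.
have [psi [cos_psi sin_psi]] := polar_coords (p - s) (- (2 * q)).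
set rho := Num.sqrt _ in cos_psi sin_psi.
set c := cos (psi / 2); set t := sin (psi / 2).
have cos_psiE : cos psi = c ^+ 2 - t ^+ 2 by rewrite {1}[psi]splitr cosD -/c -/t; ring.
have sin_psiE : sin psi = 2 * c * t by rewrite {1}[psi]splitr sinD -/c -/t; ring.
have off_diag : c * t * (p - s) + q * (c ^+ 2 - t ^+ 2) = 0.
  have qE : q = - (rho * sin psi) / 2 by rewrite -sin_psi opprK mulrC mulKf ?pnatr_eq0.
  by rewrite cos_psi qE -cos_psiE sin_psiE; field.
exists (psi / 2); rewrite /rotmx tr_mx2 !mul_mx2 -/c -/t.
by eexists; eexists; congr mx2; rewrite -[RHS]off_diag; ring.
Qed.

(* With u ^+ 2 = b1 / a, B = a L L^T for L = [u 0; b2/(a u) 1/u] of determinant 1,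
   and SI is the inverse of L. *)
Lemma symplectic2_normalize (b1 b2 b3 : R) : 0 <= b1 -> 0 < b1 * b3 - b2 ^+ 2 ->
  let a := Num.sqrt (b1 * b3 - b2 ^+ 2) in
  exists SI, symplectic2 SI /\ SI *m mx2 b1 b2 b2 b3 *m SI^T = mx2 a 0 0 a.
Proof.
move=> b1_ge0 det_gt0 a; have a_gt0 : 0 < a by rewrite sqrtr_gt0.
have b1_gt0 : 0 < b1.
  rewrite lt_def b1_ge0 andbT; apply: contraTneq det_gt0 => ->.
  by rewrite mul0r sub0r oppr_gt0 -leNgt sqr_ge0.
set u := Num.sqrt (b1 / a); have u_gt0 : 0 < u by rewrite sqrtr_gt0 divr_gt0.
have b1E : b1 = a * u ^+ 2 by rewrite sqr_sqrtr ?divr_ge0 ?ltW // mulrC divfK ?lt0r_neq0.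
have b3E : b3 = (a ^+ 2 + b2 ^+ 2) / (a * u ^+ 2).
  rewrite sqr_sqrtr ?ltW // -b1E; field; exact: lt0r_neq0.
exists (mx2 u^-1 0 (- b2 / (a * u)) u); split.
  by apply: symplectic2_det; rewrite mul0r subr0 mulVf ?lt0r_neq0.
rewrite tr_mx2 !mul_mx2 b1E b3E; congr mx2; field; by rewrite ?lt0r_neq0.
Qed.

Lemma Omega4_sqr : Omega *m Omega = - 1%:M.
Proof.
have J_sqr : J *m J = - 1%:M.
  by rewrite /Jmx mul_mx2 -scaleN1r scalar_mx2 scale_mx2; congr mx2; ring.
rewrite mulmx_block !mulmx0 !mul0mx !addr0 !add0r J_sqr.
by rewrite [in RHS](scalar_mx_block 2 2) opp_block_mx oppr0.
Qed.

Lemma symplectic4_trmx (S : 'M[R]_(2 + 2)) : symplectic4 S -> S^T *m Omega *m S = Omega.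
Proof.
move=> sS; have : S *m - (Omega *m S^T *m Omega) = 1%:M.
  by rewrite mulmxN !mulmxA sS Omega4_sqr opprK.
move/mulmx1C/(congr1 (mulmx Omega)); rewrite mulmx1 mulNmx mulmxN !mulmxA Omega4_sqr.
by rewrite !mulNmx mul1mx opprK.
Qed.

Lemma symplectic4_mul (S T : 'M[R]_(2 + 2)) :
  symplectic4 S -> symplectic4 T -> symplectic4 (S *m T).
Proof.
rewrite /symplectic4 trmx_mul => sS sT.
by rewrite !mulmxA -(mulmxA S T) -(mulmxA S (T *m _)) sT sS.
Qed.

Lemma symplectic4_block_diag (A B : 'M[R]_2) :
  symplectic2 A -> symplectic2 B -> symplectic4 (block_mx A 0 0 B).
Proof.
rewrite /symplectic4 /Omega4 mulmx_block_diag_tr => -> ->.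
by rewrite !mulmx0 !mul0mx.
Qed.

Lemma symplectic4_drsub (S : 'M[R]_(2 + 2)) : symplectic4 S ->
  dlsubmx S *m J *m (dlsubmx S)^T + drsubmx S *m J *m (drsubmx S)^T = J.
Proof.
move/(congr1 drsubmx); rewrite -{1 2}(submxK S) /Omega4 tr_block_mx !mulmx_block.
by rewrite !block_mxKdr !mulmx0 !addr0 !add0r.
Qed.

(* Cauchy-Binet: the Gram determinant of the rows of [P Q] is the sum of the squared
   2x2 minors of [P Q], two of which are det P and det Q, and det P + det Q = 1. *)
Lemma gram_det_gt0 (P Q : 'M[R]_2) :
  P *m J *m P^T + Q *m J *m Q^T = J ->
  let G := P *m P^T + Q *m Q^T in 0 < G 0 0 * G 1 1 - G 0 1 ^+ 2.
Proof.
rewrite (mx2E P) (mx2E Q).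
move: (P 0 0) (P 0 1) (P 1 0) (P 1 1) (Q 0 0) (Q 0 1) (Q 1 0) (Q 1 1) => p q r s t u v w.
rewrite !mx2_Jmx_tr -scalerDl {2}/Jmx scale_mx2 mulr1 => /mx2_inj[_ detPQ _ _] /=.
rewrite !tr_mx2 !mul_mx2 add_mx2 !mxE /=.
set dP := p * s - q * r; set dQ := t * w - u * v.
have -> : (p * p + q * q + (t * t + u * u)) * (r * r + s * s + (v * v + w * w))
    - (p * r + q * s + (t * v + u * w)) ^+ 2 =
    (p * v - t * r) ^+ 2 + (p * w - u * r) ^+ 2 + (q * v - t * s) ^+ 2
    + (q * w - u * s) ^+ 2 + (dP ^+ 2 + dQ ^+ 2) by rewrite /dP /dQ; ring.
apply: ltr_wpDl; first by rewrite !addr_ge0 ?sqr_ge0.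
rewrite lt_def paddr_eq0 ?sqr_ge0 // !sqrf_eq0 addr_ge0 ?sqr_ge0 // andbT.
apply/negP => /andP[/eqP dP0 /eqP dQ0].
by move/eqP: detPQ; rewrite -/dP -/dQ dP0 dQ0 addr0 eq_sym oner_eq0.
Qed.

Lemma purity_block_eqs (l1 l2 a x y z w : R) :
  let Sig := block_mx (mx2 l1 0 0 l2) (mx2 x y z w) (mx2 x y z w)^T (mx2 a 0 0 a) in
  Sig *m Omega *m Sig = 4%:R^-1 *: Omega ->
  [/\ l1 * l2 + (x * w - y * z) = 4%:R^-1, l1 * z = a * y, l1 * w = - (a * x)
    & x * w - y * z + a ^+ 2 = 4%:R^-1].
Proof.
rewrite /= /Omega4 /Jmx !mulmx_block !mx2_zero !tr_mx2 scale_block_mx !scale_mx2.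
rewrite !(mul_mx2, add_mx2) => /eq_block_mx[/mx2_inj[_ UL _ _] /mx2_inj[UR1 UR2 _ _] _].
case/mx2_inj=> _ DR _ _.
split; first (by rewrite -[RHS]mulr1 -UL; ring); last by rewrite -[RHS]mulr1 -DR; ring.
  by apply/subr0_eq; rewrite -(mulr0 4%:R^-1) -UR1; ring.
by apply/subr0_eq; rewrite -(mulr0 4%:R^-1) -UR2; ring.
Qed.

Lemma purity_block_solution (l1 l2 a x y z w : R) : 0 < a -> 0 <= l1 ->
  [/\ l1 * l2 + (x * w - y * z) = 4%:R^-1, l1 * z = a * y, l1 * w = - (a * x)
    & x * w - y * z + a ^+ 2 = 4%:R^-1] ->
  2%:R^-1 <= a /\ exists r phi, 0 < r /\ [/\ l1 = a * r, l2 = a * r^-1 &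
    mx2 x y z w = Num.sqrt (a ^+ 2 - 4%:R^-1) *: mx2 (Num.sqrt r * cos phi)
      (Num.sqrt r * sin phi) (Num.sqrt (r^-1) * sin phi) (- (Num.sqrt (r^-1) * cos phi))].
Proof.
move=> a_gt0 l1_ge0 [UL UR1 UR2 DR]; have a_neq0 := lt0r_neq0 a_gt0.
have l1l2 : l1 * l2 = a ^+ 2 by apply: (addIr (x * w - y * z)); rewrite UL addrC DR.
have l1_neq0 : l1 != 0.
  by apply: contra_neq (expf_neq0 2 a_neq0) => l10; rewrite -l1l2 l10 mul0r.
set r := l1 / a; have r_gt0 : 0 < r by rewrite divr_gt0 // lt_def l1_neq0.
have r_neq0 := lt0r_neq0 r_gt0.
have l1E : l1 = a * r by rewrite /r mulrC divfK.
have l2E : l2 = a * r^-1 by apply: (mulfI l1_neq0); rewrite l1l2 {1}l1E; field.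
have zE : z = y / r by apply: (mulfI l1_neq0); rewrite UR1 l1E; field.
have wE : w = - x / r by apply: (mulfI l1_neq0); rewrite UR2 l1E; field.
have sum_sq : x ^+ 2 + y ^+ 2 = r * (a ^+ 2 - 4%:R^-1).
  by rewrite -DR zE wE; field.
have c2_ge0 : 0 <= a ^+ 2 - 4%:R^-1.
  by rewrite -(pmulr_rge0 _ r_gt0) -sum_sq addr_ge0 ?sqr_ge0.
split.
  have quarter : 4%:R^-1 = 2%:R^-1 ^+ 2 :> R by rewrite exprVn -natrX.
  by rewrite -ler_sqr ?nnegrE ?invr_ge0 ?ler0n ?(ltW a_gt0) // -quarter -subr_ge0.
set sr := Num.sqrt r; have sr_neq0 : sr != 0 by rewrite gt_eqF ?sqrtr_gt0.
have rE : r = sr ^+ 2 by rewrite sqr_sqrtr ?ltW.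
have [phi [xE yE]] := polar_coords (x / sr) (y / sr).
have sum_sq_sr : (x / sr) ^+ 2 + (y / sr) ^+ 2 = a ^+ 2 - 4%:R^-1.
  by rewrite !expr_div_n -mulrDl sum_sq -rE mulrC mulKf.
rewrite sum_sq_sr in xE yE; set c := Num.sqrt _ in xE yE.
have {}xE : x = sr * (c * cos phi) by rewrite -xE mulrC divfK.
have {}yE : y = sr * (c * sin phi) by rewrite -yE mulrC divfK.
exists r, phi; split => //; split => //.
rewrite scale_mx2 sqrtrV ?ltW // -/sr -/c zE wE rE xE yE.
by congr mx2; field.
Qed.

Lemma transform_cm_block theta SI (Sig : 'M[R]_(2 + 2)) :
  transform_cm theta SI Sig = block_mx
    (rotmx theta *m ulsubmx Sig *m (rotmx theta)^T) (rotmx theta *m ursubmx Sig *m SI^T)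
    (SI *m dlsubmx Sig *m (rotmx theta)^T) (SI *m drsubmx Sig *m SI^T).
Proof. by rewrite /transform_cm -{1}[Sig]submxK mulmx_block_diag_tr. Qed.

Section PureCovariance.
Variable Sig : 'M[R]_(2 + 2).
Hypothesis pure_Sig : pure_gaussian_cm Sig.

Lemma pure_cm_sym : Sig^T = Sig.
Proof. by case: pure_Sig => S [_ ->]; rewrite linearZ /= trmx_mul trmxK. Qed.

Lemma pure_cm_diag_ge0 i : 0 <= Sig i i.
Proof.
case: pure_Sig => S [_ ->]; rewrite !mxE mulr_ge0 ?invr_ge0 ?ler0n ?sumr_ge0 // => k _.
by rewrite !mxE -expr2 sqr_ge0.
Qed.

Lemma pure_cm_purity : Sig *m Omega *m Sig = 4%:R^-1 *: Omega.
Proof.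
case: pure_Sig => S [sS ->]; rewrite -!scalemxAl -!scalemxAr scalerA -invfM -natrM.
by rewrite !mulmxA -(mulmxA S S^T) -(mulmxA S (S^T *m _)) (symplectic4_trmx sS) sS.
Qed.

Lemma pure_cm_drsub_det_gt0 : let B := drsubmx Sig in 0 < B 0 0 * B 1 1 - B 0 1 ^+ 2.
Proof.
case: pure_Sig => S [sS ->] /=.
have -> : drsubmx (2%:R^-1 *: (S *m S^T)) = 2%:R^-1 *: drsubmx (S *m S^T).
  by rewrite -{1}(submxK (S *m S^T)) scale_block_mx block_mxKdr.
move: (gram_det_gt0 (symplectic4_drsub sS)); rewrite -drsubmx_mul_tr /=.
set G := drsubmx (S *m S^T) => G_gt0; rewrite ![(_ *: G) _ _]mxE.
have -> : 2%:R^-1 * G 0 0 * (2%:R^-1 * G 1 1) - (2%:R^-1 * G 0 1) ^+ 2 =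
          4%:R^-1 * (G 0 0 * G 1 1 - G 0 1 ^+ 2) by field.
by rewrite mulr_gt0 ?invr_gt0 ?ltr0n.
Qed.

Lemma transform_pure_cm theta SI :
  symplectic2 SI -> pure_gaussian_cm (transform_cm theta SI Sig).
Proof.
case: pure_Sig => S [sS ->] sSI; exists (block_mx (rotmx theta) 0 0 SI *m S); split.
  exact/symplectic4_mul/sS/symplectic4_block_diag/sSI/rotmx_symplectic.
by rewrite /transform_cm -scalemxAr -scalemxAl trmx_mul !mulmxA.
Qed.

Lemma pure_cm_normal_form (a l1 l2 : R) : 0 < a ->
  ulsubmx Sig = mx2 l1 0 0 l2 -> drsubmx Sig = mx2 a 0 0 a ->
  2%:R^-1 <= a /\ exists r phi, 0 < r /\ Sig = normal_form a r phi.
Proof.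
move=> a_gt0 ulE drE.
have SigE : Sig = block_mx (mx2 l1 0 0 l2) (ursubmx Sig) (ursubmx Sig)^T (mx2 a 0 0 a).
  by rewrite -ulE -drE trmx_ursub pure_cm_sym submxK.
have l1_ge0 : 0 <= l1.
  move/(congr1 (fun M : 'M[R]_2 => M 0 0)): ulE; rewrite !mxE /= => <-.
  exact: pure_cm_diag_ge0.
have purity := pure_cm_purity; rewrite SigE (mx2E (ursubmx Sig)) in purity.
have [half_le_a [r [phi [r_gt0 [l1E l2E CE]]]]] :=
  purity_block_solution a_gt0 l1_ge0 (purity_block_eqs purity).
split=> //; exists r, phi; split=> //.
by rewrite SigE [ursubmx Sig]mx2E CE l1E l2E.
Qed.

End PureCovariance.

End TwoModeGaussian.

Theorem lemma3 (R : realType) (Sig : 'M[R]_(2 + 2)) :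
  pure_gaussian_cm Sig ->
  exists (theta : R) (SI : 'M[R]_2),
    symplectic2 SI /\
    exists a r phi : R,
      2%:R^-1 <= a /\ 0 < r /\ transform_cm theta SI Sig = normal_form a r phi.
Proof.
move=> pure_Sig.
have [A_sym B_sym] : (ulsubmx Sig)^T = ulsubmx Sig /\ (drsubmx Sig)^T = drsubmx Sig.
  by rewrite trmx_ulsub trmx_drsub pure_cm_sym.
set A := ulsubmx Sig in A_sym; set B := drsubmx Sig in B_sym.
have B00_ge0 : 0 <= B 0 0 by rewrite /B !mxE; apply: pure_cm_diag_ge0.
have [SI [sSI SIB]] := symplectic2_normalize B00_ge0 (pure_cm_drsub_det_gt0 pure_Sig).
have [theta [l1 [l2 RA]]] := rotmx_diagonalize (A 0 0) (A 0 1) (A 1 1).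
exists theta, SI; split=> //.
set a := Num.sqrt _ in SIB.
have a_gt0 : 0 < a by rewrite sqrtr_gt0; apply: pure_cm_drsub_det_gt0.
have TE := transform_cm_block theta SI Sig.
rewrite -/A -/B (sym_mx2E A_sym) (sym_mx2E B_sym) RA SIB in TE.
have ulE : ulsubmx (transform_cm theta SI Sig) = mx2 l1 0 0 l2 by rewrite TE block_mxKul.
have drE : drsubmx (transform_cm theta SI Sig) = mx2 a 0 0 a by rewrite TE block_mxKdr.
have [half_le_a [r [phi [r_gt0 nf]]]] :=
  pure_cm_normal_form (transform_pure_cm pure_Sig theta sSI) a_gt0 ulE drE.
by exists a, r, phi.
Qed.
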